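(* For all $u,v,w\in\mathcal{A}(D)$ we have $\langle u, v*w\rangle=\langle u*v,w\rangle$.
   Context: Let $G$ be a group generated by a conjugacy class $D$ of involutions such that for all $d,e\in D$ the order of $de$ is $1$, $2$ or $3$ ($3$-transpositions). Lines of the Fischer space on $D$ are triples $\{d,e,d^e\}$ with $d,e\in D$ non-commuting. $\mathcal{A}(D)$ is the $\mathbb{F}_2$-vector space with basis $D$ (finite subsets of $D$ under symmetric difference), with bilinear product determined by $d*e=d+e+f$ if $\{d,e,f\}$ is a line and $d*e=0$ otherwise. The bilinear form $\langle\cdot,\cdot\rangle$ on $\mathcal{A}(D)$ is determined by $\langle d,e\rangle=1$ if $d,e$ do not commute and $\langle d,e\rangle=0$ otherwise. *)

From HB Require Import structures.
From mathcomp Require Import all_boot.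
From mathcomp Require Import finmap.

Set Implicit Arguments.
Unset Strict Implicit.
Unset Printing Implicit Defensive.

Local Open Scope fset_scope.
Local Open Scope group_scope.

Section Defs.
Variable G : groupType.

Definition elt_order_is (x : G) (n : nat) : Prop :=
  (0 < n)%N /\ x ^+ n = 1 /\ forall m : nat, (0 < m < n)%N -> x ^+ m <> 1.

Definition is_conj_class (D : {pred G}) : Prop :=
  exists d0 : G, forall x : G, x \in D <-> exists g : G, x = d0 ^ g.

Definition generated_by (D : {pred G}) : Prop :=
  forall H : {pred G},
    1 \in H ->
    (forall x y, x \in H -> y \in H -> x * y \in H) ->
    (forall x, x \in H -> x^-1 \in H) ->
    {subset D <= H} -> forall g : G, g \in H.

Definition three_transp_class (D : {pred G}) : Prop :=
  [/\ is_conj_class D,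
      generated_by D,
      (forall d, d \in D -> elt_order_is d 2) &
      (forall d e, d \in D -> e \in D ->
         elt_order_is (d * e) 1 \/ elt_order_is (d * e) 2 \/ elt_order_is (d * e) 3)].

(* Elements of A(D): finite subsets of D; addition = symmetric difference *)
Definition symd (A B : {fset G}) : {fset G} := (A `\` B) `|` (B `\` A).

Definition in_AD (D : {pred G}) (u : {fset G}) : Prop := {subset u <= D}.

(* product of basis elements: d*e = d+e+f if {d,e,f} is a line (d,e non-commuting,
   f = d^e), and 0 otherwise *)
Definition basis_prod (d e : G) : {fset G} :=
  if d * e != e * d then symd [fset d] (symd [fset e] [fset d ^ e]) else fset0.

Definition AD_prod (u v : {fset G}) : {fset G} :=
  \big[symd/fset0]_(d <- enum_fset u) \big[symd/fset0]_(e <- enum_fset v) basis_prod d e.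

(* bilinear form with values in F_2 = (bool, addb): <d,e> = 1 iff d,e do not commute *)
Definition basis_form (d e : G) : bool := d * e != e * d.

Definition AD_form (u v : {fset G}) : bool :=
  \big[addb/false]_(d <- enum_fset u) \big[addb/false]_(e <- enum_fset v) basis_form d e.

End Defs.

(** In a 3-transposition class, a line {d, e, d^e} is closed under the
    conjugations by its points, and conjugation preserves the form.  Both
    sides of the identity are bilinear in each variable, so it suffices to
    check it on basis elements d, e, f.  If d and e commute and e and f do
    not (or vice versa), conjugating by e fixes one of d, f and the two
    remaining terms cancel; if neither pair commutes, conjugation by e maps
    the pair (d, e^f) to (d^e, f) and both sides become
    <d,f> + 1 + <d^e,f>. *)
From HB Require Import structures.
From mathcomp Require Import all_boot.
From mathcomp Require Import finmap.

Set Implicit Arguments.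
Unset Strict Implicit.
Unset Printing Implicit Defensive.

Local Open Scope fset_scope.
Local Open Scope group_scope.

Section GroupFacts.
Variable G : groupType.
Implicit Types x y : G.

Lemma invg_involution x : x * x = 1 -> x^-1 = x.
Proof. exact: mulg1_eq. Qed.

Lemma conjg_braid x y :
  x * x = 1 -> y * y = 1 -> (x * y) ^+ 3 = 1 -> (x ^ y) ^ x = y.
Proof.
move=> xx1 yy1 xy3; have xV := invg_involution xx1; have yV := invg_involution yy1.
have braid : x * y * x = y * x * y.
  have /mulg1_eq <- : (x * y * x) * (y * x * y) = 1.
    by rewrite -xy3 !expgS expg0 mulg1 !mulgA.
  by rewrite !invgM xV yV !mulgA.
by rewrite !conjgE xV yV !mulgA braid -(mulgA _ y y) yy1 mulg1 -mulgA xx1 mulg1.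
Qed.

Lemma commute_involutions_of_order_le2 x y :
  x * x = 1 -> y * y = 1 -> (x * y) ^+ 2 = 1 -> x * y = y * x.
Proof.
move=> xx1 yy1; rewrite expgS expg1 => /mulg1_eq <-.
by rewrite invgM !invg_involution.
Qed.

Lemma conjg_fix x y : x * y = y * x -> x ^ y = x.
Proof. by move=> xy; rewrite conjgE xy mulKg. Qed.

Lemma basis_form_sym x y : basis_form x y = basis_form y x.
Proof. by rewrite /basis_form eq_sym. Qed.

Lemma basis_form_conj x y g : basis_form (x ^ g) (y ^ g) = basis_form x y.
Proof. by rewrite /basis_form -!conjMg (inj_eq (@conjg_inj _ g)). Qed.

Lemma basis_form_commute x y : ~~ basis_form x y -> x * y = y * x.
Proof. by rewrite negbK => /eqP. Qed.

End GroupFacts.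

Section ThreeTranspositions.
Variables (G : groupType) (D : {pred G}).
Hypothesis D3 : three_transp_class D.

Lemma three_transp_involutive d : d \in D -> d * d = 1.
Proof. by case: D3 => _ _ ord2 _ /ord2 [_ [d2 _]]; rewrite -expg2. Qed.

Lemma three_transp_order3 d e :
  d \in D -> e \in D -> basis_form d e -> (d * e) ^+ 3 = 1.
Proof.
move=> dD eD /eqP de_ed; have [_ _ _ ord123] := D3.
have [dd1 ee1] := (three_transp_involutive dD, three_transp_involutive eD).
case: (ord123 d e dD eD) => [[_ [de1 _]] | [[_ [de2 _]] | [_ [de3 _]]]] //;
  case: de_ed.
- by rewrite expg1 in de1; rewrite -(mulg1_eq de1) invg_involution.
- exact: commute_involutions_of_order_le2 dd1 ee1 de2.
Qed.

Lemma three_transp_line_conj d e :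
  d \in D -> e \in D -> basis_form d e -> (d ^ e) ^ d = e.
Proof.
move=> dD eD de; apply: conjg_braid; [exact: three_transp_involutive..|].
exact: three_transp_order3.
Qed.

End ThreeTranspositions.

Definition fparity (T : choiceType) (g : T -> bool) (A : {fset T}) : bool :=
  \big[addb/false]_(x <- enum_fset A) g x.

Section Parity.
Variable T : choiceType.
Implicit Types (g : T -> bool) (A : {fset T}).

Lemma fparity_seq g A s : uniq s -> {subset A <= s} ->
  fparity g A = \big[addb/false]_(x <- s | x \in A) g x.
Proof.
move=> s_uniq As; rewrite /fparity -[RHS]big_filter; apply: perm_big.
apply: uniq_perm; [exact: fset_uniq | exact: filter_uniq |] => x.
by rewrite mem_filter andb_idr //; apply: As.
Qed.

Lemma fparity0 g : fparity g fset0 = false.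
Proof. by rewrite (@fparity_seq g _ [::]) ?big_nil // => x; rewrite in_fset0. Qed.

Lemma fparity1 g x : fparity g [fset x] = g x.
Proof.
rewrite (@fparity_seq g _ [:: x]) ?big_cons ?big_nil ?inE ?eqxx ?addbF // => y.
by rewrite !inE.
Qed.

End Parity.

Section SymmetricDifference.
Variable G : groupType.
Implicit Types (g : G -> bool) (A B : {fset G}).

Lemma fparity_symd g A B : fparity g (symd A B) = fparity g A (+) fparity g B.
Proof.
have AB_uniq := fset_uniq (A `|` B).
have sub_A : {subset A <= enum_fset (A `|` B)} by move=> x; rewrite !inE => ->.
have sub_B : {subset B <= enum_fset (A `|` B)}.
  by move=> x; rewrite !inE => ->; rewrite orbT.
have sub_AB : {subset symd A B <= enum_fset (A `|` B)}.
  by move=> x; rewrite /symd !inE; case: (x \in A); case: (x \in B).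
rewrite (fparity_seq _ AB_uniq sub_A) (fparity_seq _ AB_uniq sub_B).
rewrite (fparity_seq _ AB_uniq sub_AB).
rewrite big_mkcond [X in _ = X (+) _]big_mkcond [X in _ = _ (+) X]big_mkcond.
rewrite -big_split; apply: eq_bigr => x _ /=.
by rewrite /symd !inE; case: (x \in A); case: (x \in B); case: (g x).
Qed.

Lemma fparity_big (I : Type) g (r : seq I) (F : I -> {fset G}) :
  fparity g (\big[@symd G/fset0]_(i <- r) F i) =
  \big[addb/false]_(i <- r) fparity g (F i).
Proof.
elim: r => [|i r IH]; first by rewrite !big_nil fparity0.
by rewrite !big_cons fparity_symd IH.
Qed.

Lemma fparity_basis_prod g d e : fparity g (basis_prod d e) =
  basis_form d e && (g d (+) (g e (+) g (d ^ e))).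
Proof.
rewrite /basis_prod /basis_form; case: ifP => _; first by rewrite !fparity_symd !fparity1.
exact: fparity0.
Qed.

End SymmetricDifference.

Lemma AD_form_basis_assoc (G : groupType) (D : {pred G}) :
  three_transp_class D -> forall d e f, d \in D -> e \in D -> f \in D ->
  fparity (basis_form d) (basis_prod e f) =
  fparity (fun x => basis_form x f) (basis_prod d e).
Proof.
move=> D3 d e f dD eD fD; rewrite !fparity_basis_prod.
have [ef|nef] := boolP (basis_form e f); have [de|nde] := boolP (basis_form d e) => //=.
- have -> : basis_form d (e ^ f) = basis_form (d ^ e) f.
    by rewrite -(basis_form_conj _ _ e) (three_transp_line_conj D3).
  by case: (basis_form d f); case: (basis_form (d ^ e) f).
- have -> : basis_form d (e ^ f) = basis_form d f.
    have de_d : d ^ e = d by apply/conjg_fix/basis_form_commute.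
    by rewrite -(basis_form_conj _ _ e) de_d (three_transp_line_conj D3).
  by rewrite addbb.
- have -> : basis_form (d ^ e) f = basis_form d f.
    have fe : f ^ e = f by apply/conjg_fix/basis_form_commute; rewrite basis_form_sym.
    by rewrite -{1}fe basis_form_conj.
  by rewrite addbb.
Qed.

Theorem proposition2p1 (G : groupType) (D : {pred G}) :
  three_transp_class D ->
  forall u v w : {fset G}, in_AD D u -> in_AD D v -> in_AD D w ->
    AD_form u (AD_prod v w) = AD_form (AD_prod u v) w.
Proof.
move=> D3 u v w uD vD wD.
change (fparity (fun d => fparity (basis_form d) (AD_prod v w)) u =
        fparity (fun x => fparity (basis_form x) w) (AD_prod u v)).
rewrite /AD_prod fparity_big; apply: eq_big_seq => d du.
rewrite !fparity_big; apply: eq_big_seq => e ev.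
rewrite fparity_big /fparity exchange_big; apply: eq_big_seq => f fw.
exact: AD_form_basis_assoc (uD _ du) (vD _ ev) (wD _ fw).
Qed.
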